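(* For every $\varphi\in\mathcal{L}_{CoRGAL}$, if $\varphi$ is valid then $\varphi\in\mathbf{CoRGAL}$.
   Context: Fix a finite set $A$ of agents and a countable set $P$ of propositional variables. The language $\mathcal{L}_{CoRGAL}$ is given by $\varphi ::= p \mid \neg\varphi \mid (\varphi\wedge\varphi) \mid K_a\varphi \mid [\varphi]\varphi \mid [G,\varphi]\varphi \mid [\langle G\rangle]\varphi$ with $p\in P$, $a\in A$, $G\subseteq A$. $\mathcal{L}_{EL}$ is the fragment built only from $p,\neg,\wedge,K_a$. Duals: $\langle\psi\rangle\varphi:=\neg[\psi]\neg\varphi$, $\langle G,\psi\rangle\varphi:=\neg[G,\psi]\neg\varphi$. $\mathcal{L}^G_{EL}$ is the set of formulas $\bigwedge_{i\in G}K_i\varphi_i$ with $\varphi_i\in\mathcal{L}_{EL}$; $\psi_G,\chi_G$ range over it. Semantics over epistemic models $M=(W,\sim,V)$ ($W\ne\emptyset$, $\sim_a$ equivalence relations, $V:P\to\mathcal{P}(W)$; $M^\varphi$ the restriction to $\{v:(M,v)\models\varphi\}$): standard for $p,\neg,\wedge,K_a$; $[\varphi]\psi$ holds at $w$ iff $(M,w)\models\varphi$ implies $(M^\varphi,w)\models\psi$; $[G,\chi]\varphi$ holds iff $\chi$ holds and $[\psi_G\wedge\chi]\varphi$ holds for all $\psi_G$; $[\langle G\rangle]\varphi$ holds iff for every $\psi_G$ there is $\chi_{A\setminus G}$ with $\psi_G\to\langle\psi_G\wedge\chi_{A\setminus G}\rangle\varphi$ holding. Valid means true at every pointed model. Necessity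 forms: $\eta ::= \sharp \mid \varphi\to\eta(\sharp)\mid K_a\eta(\sharp)\mid[\varphi]\eta(\sharp)$, $\eta(\varphi)$ replaces the unique $\sharp$ by $\varphi$. $\mathbf{CoRGAL}$ is the smallest set containing all instances of (A0) propositional tautologies; (A1) $K_a(\varphi\to\psi)\to(K_a\varphi\to K_a\psi)$; (A2) $K_a\varphi\to\varphi$; (A3) $K_a\varphi\to K_aK_a\varphi$; (A4) $\neg K_a\varphi\to K_a\neg K_a\varphi$; (A5) $[\varphi]p\leftrightarrow(\varphi\to p)$; (A6) $[\varphi]\neg\psi\leftrightarrow(\varphi\to\neg[\varphi]\psi)$; (A7) $[\varphi](\psi\wedge\chi)\leftrightarrow([\varphi]\psi\wedge[\varphi]\chi)$; (A8) $[\varphi]K_a\psi\leftrightarrow(\varphi\to K_a[\varphi]\psi)$; (A9) $[\varphi][\psi]\chi\leftrightarrow[\varphi\wedge[\varphi]\psi]\chi$; (A10) $[G,\chi]\varphi\to\chi\wedge[\psi_G\wedge\chi]\varphi$; (A11) $[\langle G\rangle]\varphi\to\langle A\setminus G,\psi_G\rangle\varphi$; closed under (R0) modus ponens; (R1) $\varphi/K_a\varphi$; (R2) $\varphi/[\psi]\varphi$; (R3) $\varphi/[G,\chi]\varphi$; (R4) $\varphi/[\langle G\rangle]\varphi$; (R5) from $\eta(\chi\wedge[\psi_G\wedge\chi]\varphi)$ for all $\psi_G$ infer $\eta([G,\chi]\varphi)$; (R6) from $\eta(\langle A\setminus G,\psi_G\rangle\varphi)$ for all $\psi_G$ infer $\eta([\langle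 G\rangle]\varphi)$. *)

From mathcomp Require Import all_boot.
Set Implicit Arguments.
Unset Strict Implicit.
Unset Printing Implicit Defensive.

Section CoRGAL.
Variables (A : finType) (P : countType).

Inductive form : Type :=
| Var of P
| Neg of form
| And of form & form
| K of A & form
| Ann of form & form
| GAnn of {set A} & form & form
| CoAnn of {set A} & form.

Definition Imp (f g : form) : form := Neg (And f (Neg g)).
Definition Iff (f g : form) : form := And (Imp f g) (Imp g f).
Definition Dia (f g : form) : form := Neg (Ann f (Neg g)).
Definition DiaG (G : {set A}) (chi f : form) : form :=
  Neg (GAnn G chi (Neg f)).
Definition Top (p : P) : form := Neg (And (Var p) (Neg (Var p))).

Fixpoint isEL (f : form) : Prop :=
  match f with
  | Var _ => True
  | Neg g => isEL g
  | And g h => isEL g /\ isEL h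
  | K _ g => isEL g
  | _ => False
  end.

Fixpoint conjOf (l : seq form) (f : form) : Prop :=
  match l with
  | [::] => exists p, f = Top p
  | x :: l' =>
      match l' with
      | [::] => f = x
      | _ => exists f', f = And x f' /\ conjOf l' f'
      end
  end.

(* L^G_EL : formulas  /\_{i in G} K_i phi_i  with phi_i in L_EL *)
Definition isELG (G : {set A}) (psi : form) : Prop :=
  exists phis : A -> form, (forall i, isEL (phis i)) /\
    conjOf [seq K i (phis i) | i <- enum G] psi.

Fixpoint qc (f : form) : nat :=
  match f with
  | Var _ => 0
  | Neg g => qc g
  | And g h => qc g + qc h
  | K _ g => qc g
  | Ann g h => qc g + qc h
  | GAnn _ chi g => (qc chi + qc g).+1
  | CoAnn _ g => (qc g).+1
  end.

Record model : Type := Model {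
  world : Type;
  world_inhabited : world;
  rel : A -> world -> world -> Prop;
  rel_refl : forall a w, rel a w w;
  rel_sym : forall a w v, rel a w v -> rel a v w;
  rel_trans : forall a u v w, rel a u v -> rel a v w -> rel a u w;
  val : P -> world -> Prop
}.

(* Satisfaction in the submodel of M with domain D (restriction M^phi is
   represented by shrinking D).  The natural number n is fuel bounding the
   number of nested quantifiers; with n = qc f it is never exhausted. *)
Fixpoint satn (M : model) (n : nat) : (world M -> Prop) -> world M -> form -> Prop :=
  fix go (D : world M -> Prop) (w : world M) (f : form) {struct f} : Prop :=
  match f with
  | Var p => @val M p w
  | Neg g => ~ go D w g
  | And g h => go D w g /\ go D w h
  | K a g => forall v, D v -> @rel M a w v -> go D v g
  | Ann g h => go D w g -> go (fun v => D v /\ go D v g) w h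
  | GAnn G chi g =>
      match n with
      | 0 => False
      | m.+1 => go D w chi /\
                forall psi, isELG G psi -> satn m D w (Ann (And psi chi) g)
      end
  | CoAnn G g =>
      match n with
      | 0 => False
      | m.+1 => forall psi, isELG G psi ->
                  exists chi, isELG (~: G) chi /\
                    satn m D w (Imp psi (Dia (And psi chi) g))
      end
  end.

Arguments satn : clear implicits.
Arguments satn M n D w f : rename.

Definition sat (M : model) (w : world M) (f : form) : Prop :=
  satn M (qc f) (fun _ => True) w f.

Definition valid (f : form) : Prop := forall (M : model) (w : world M), @sat M w f.

(* Propositional tautologies (instances): true under every boolean valuation of
   the maximal non-propositional subformulas. *)
Fixpoint peval (v : form -> bool) (f : form) : bool :=
  match f with
  | Neg g => ~~ peval v g
  | And g h => peval v g && peval v h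
  | _ => v f
  end.

Definition taut (f : form) : Prop := forall v, peval v f.

Inductive nform : Type :=
| NHole
| NImp of form & nform
| NK of A & nform
| NAnn of form & nform.

Fixpoint fill (e : nform) (x : form) : form :=
  match e with
  | NHole => x
  | NImp f e' => Imp f (fill e' x)
  | NK a e' => K a (fill e' x)
  | NAnn f e' => Ann f (fill e' x)
  end.

Inductive CoRGAL : form -> Prop :=
| Ax0 f : taut f -> CoRGAL f
| Ax1 a f g : CoRGAL (Imp (K a (Imp f g)) (Imp (K a f) (K a g)))
| Ax2 a f : CoRGAL (Imp (K a f) f)
| Ax3 a f : CoRGAL (Imp (K a f) (K a (K a f)))
| Ax4 a f : CoRGAL (Imp (Neg (K a f)) (K a (Neg (K a f))))
| Ax5 f p : CoRGAL (Iff (Ann f (Var p)) (Imp f (Var p)))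
| Ax6 f g : CoRGAL (Iff (Ann f (Neg g)) (Imp f (Neg (Ann f g))))
| Ax7 f g h : CoRGAL (Iff (Ann f (And g h)) (And (Ann f g) (Ann f h)))
| Ax8 f a g : CoRGAL (Iff (Ann f (K a g)) (Imp f (K a (Ann f g))))
| Ax9 f g h : CoRGAL (Iff (Ann f (Ann g h)) (Ann (And f (Ann f g)) h))
| Ax10 G chi f psi : isELG G psi ->
    CoRGAL (Imp (GAnn G chi f) (And chi (Ann (And psi chi) f)))
| Ax11 G f psi : isELG G psi ->
    CoRGAL (Imp (CoAnn G f) (DiaG (~: G) psi f))
| Ru0 f g : CoRGAL (Imp f g) -> CoRGAL f -> CoRGAL g
| Ru1 a f : CoRGAL f -> CoRGAL (K a f)
| Ru2 f g : CoRGAL f -> CoRGAL (Ann g f)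
| Ru3 G chi f : CoRGAL f -> CoRGAL (GAnn G chi f)
| Ru4 G f : CoRGAL f -> CoRGAL (CoAnn G f)
| Ru5 e G chi f :
    (forall psi, isELG G psi -> CoRGAL (fill e (And chi (Ann (And psi chi) f)))) ->
    CoRGAL (fill e (GAnn G chi f))
| Ru6 e G f :
    (forall psi, isELG G psi -> CoRGAL (fill e (DiaG (~: G) psi f))) ->
    CoRGAL (fill e (CoAnn G f)).

End CoRGAL.

(* Canonical-model argument.  A non-theorem is kept out of a maximal consistent set
   built by a Lindenbaum construction that also respects the infinitary rules R5 and
   R6.  Maximal consistent sets, related by "K_a f in Gamma implies f in Delta",
   form an S5 model in which membership coincides with truth, by induction on a rank
   that decreases under subformulas, under the reduction axioms A5-A9, and from a
   quantified formula to its premises: by A10/A11 and closure under R5/R6 a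
   quantified formula is in a maximal consistent set iff all its premises are,
   which is exactly the semantics of the quantifiers. *)

From Pilot Require Import Defs.
From HB Require Import structures.
From mathcomp Require Import all_boot zify.
From Stdlib Require Import Classical ClassicalEpsilon FunctionalExtensionality.
From Stdlib Require Import PropExtensionality.

Set Implicit Arguments.
Unset Strict Implicit.
Unset Printing Implicit Defensive.

Arguments Var {A P} _.
Arguments Top {A P} p.
Arguments NHole {A P}.

Section Completeness.
Variables (A : finType) (P : countType).
Local Notation form := (form A P).
Local Notation nform := (nform A P).
Local Notation model := (model A P).

(** * Syntax *)

(* Unlike [qc], conjunction is counted by [maxn], so that unfolding [G,chi]f into
   chi /\ [psi /\ chi]f lowers it. *)
Fixpoint qdepth (f : form) : nat :=
  match f with
  | Var _ => 0
  | Neg g | K _ g => qdepth g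
  | And g h => maxn (qdepth g) (qdepth h)
  | Ann g h => qdepth g + qdepth h
  | GAnn _ c g => (qdepth c + qdepth g).+1
  | CoAnn _ g => (qdepth g).+1
  end.

(* The weights make every reduction axiom A6-A9, read from left to right, and the
   passage from [<G>]f to <A\G, psi>f decrease [wsize]. *)
Fixpoint wsize (f : form) : nat :=
  match f with
  | Var _ => 1
  | Neg g | K _ g => (wsize g).+1
  | And g h => wsize g + wsize h + 1
  | Ann g h => (wsize g + 5) * wsize h
  | GAnn _ _ g => wsize g + 2
  | CoAnn _ g => wsize g + 5
  end.

Definition rank_lt (g f : form) :=
  qdepth g < qdepth f \/ (qdepth g = qdepth f /\ wsize g < wsize f).

Lemma wsize_gt0 f : 0 < wsize f.
Proof. by elim: f => //= *; nia. Qed.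

Lemma rank_ind (Q : form -> Prop) :
  (forall f, (forall g, rank_lt g f -> Q g) -> Q f) -> forall f, Q f.
Proof.
move=> IH; suff rank_bound n m f : qdepth f < n -> wsize f < m -> Q f.
  by move=> f; apply: (rank_bound (qdepth f).+1 (wsize f).+1).
elim: n m f => // n IHn m; elim: m => // m IHm f ltd lts.
apply: IH => g [ltgf | [eqgf ltgf]].
  by apply: (IHn (wsize g).+1) => //; lia.
by apply: IHm; lia.
Qed.

Ltac solve_rank :=
  rewrite /rank_lt /=;
  repeat match goal with |- context [wsize ?x] =>
    let pos := fresh in have pos := wsize_gt0 x; move: pos; generalize (wsize x)
  end;
  intros; nia.

Lemma qdepth_le_qc (f : form) : qdepth f <= qc f.
Proof. by elim: f => //= *; lia. Qed.

Lemma isEL_qc (f : form) : isEL f -> qc f = 0.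
Proof. by elim: f => //= g IHg h IHh [/IHg -> /IHh ->]. Qed.

Lemma conjOf_qc (l : seq form) f :
  (forall x, List.In x l -> qc x = 0) -> conjOf l f -> qc f = 0.
Proof.
elim: l f => [|x [|y l] IH] f l0 /=; first by case=> p ->.
  by move=> ->; apply: l0; left.
case=> f' [-> conj_f'] /=; rewrite (IH f') //; last by move=> z zl; apply: l0; right.
by rewrite (l0 x) //; left.
Qed.

Lemma isELG_qc G (f : form) : isELG G f -> qc f = 0.
Proof.
case=> phis [EL_phis conj_f]; apply: conjOf_qc conj_f => x /List.in_map_iff [i [<- _]].
exact: isEL_qc.
Qed.

Lemma isELG_qdepth G (f : form) : isELG G f -> qdepth f = 0.
Proof. by move=> /isELG_qc qc0; have := qdepth_le_qc f; lia. Qed.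

Lemma conjOf_exists (p : P) l : exists f : form, conjOf l f.
Proof.
elim: l => [|x [|y l] [f conj_f]] /=; first by exists (Top p), p.
  by exists x.
by exists (And x f), f.
Qed.

Lemma isELG_exists (p : P) G : exists psi : form, isELG G psi.
Proof.
have [psi conj_psi] := conjOf_exists p [seq K i (Top p) | i <- enum G].
by exists psi, (fun _ => Top p).
Qed.

Lemma fill_inj (e : nform) : injective (fill e).
Proof. by elim: e => //= [f e IH|a e IH|f e IH] x y [/IH]. Qed.

(* The conclusions of the infinitary rules R5 and R6, and their premises. *)
Definition quantified (f : form) : bool :=
  match f with GAnn _ _ _ | CoAnn _ _ => true | _ => false end.

Definition omega_premise (Z Y : form) : Prop :=
  match Z with
  | GAnn G chi f => exists2 psi, isELG G psi & Y = And chi (Ann (And psi chi) f)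
  | CoAnn G f => exists2 psi, isELG G psi & Y = DiaG (~: G) psi f
  | _ => False
  end.

Lemma CoRGAL_omega e Z : quantified Z ->
  (forall Y, omega_premise Z Y -> CoRGAL (fill e Y)) -> CoRGAL (fill e Z).
Proof.
case: Z => // [G c f|G f] _ prem.
  by apply: Ru5 => psi ELG_psi; apply: prem; exists psi.
by apply: Ru6 => psi ELG_psi; apply: prem; exists psi.
Qed.

Lemma CoRGAL_premise Z Y : omega_premise Z Y -> CoRGAL (Imp Z Y).
Proof. by case: Z => //= [G c f|G f] [psi ELG_psi ->]; [apply: Ax10 | apply: Ax11]. Qed.

Lemma rank_premise Z Y : omega_premise Z Y -> rank_lt Y Z.
Proof.
case: Z => //= [G c f|G f] [psi /isELG_qdepth psi0 ->];
  rewrite /rank_lt /= psi0; [left | right]; lia.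
Qed.

Lemma rank_Ann_premise phi Z Y : omega_premise Z Y -> rank_lt (Ann phi Y) (Ann phi Z).
Proof.
case: Z => //= [G c f|G f] [psi /isELG_qdepth psi0 ->]; rewrite /rank_lt /= psi0.
  by left; lia.
by right; split; [lia | solve_rank].
Qed.

Fixpoint some_var (f : form) : P :=
  match f with
  | Var p => p
  | Neg g | And g _ | K _ g | Ann g _ | GAnn _ g _ | CoAnn _ g => some_var g
  end.

(** * Semantics *)

Section Semantics.
Variable M : model.
Implicit Types (D : world M -> Prop) (w : world M).
Local Notation satM := (@satn A P M).

Lemma satn_Var n D w p : satM n D w (Var p) = Defs.val p w.
Proof. by case: n. Qed.
Lemma satn_Neg n D w g : satM n D w (Neg g) = ~ satM n D w g.
Proof. by case: n. Qed.
Lemma satn_And n D w g h : satM n D w (And g h) = (satM n D w g /\ satM n D w h).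
Proof. by case: n. Qed.
Lemma satn_K n D w a g :
  satM n D w (K a g) = (forall v, D v -> Defs.rel a w v -> satM n D v g).
Proof. by case: n. Qed.
Lemma satn_Ann n D w g h :
  satM n D w (Ann g h) = (satM n D w g -> satM n (fun v => D v /\ satM n D v g) w h).
Proof. by case: n. Qed.

Lemma satn_GAnn n D w G c g : satM n.+1 D w (GAnn G c g) =
  (satM n.+1 D w c /\ forall psi, isELG G psi -> satM n D w (Ann (And psi c) g)).
Proof. by []. Qed.
Lemma satn_CoAnn n D w G g : satM n.+1 D w (CoAnn G g) =
  (forall psi, isELG G psi -> exists chi, isELG (~: G) chi /\
     satM n D w (Imp psi (Dia (And psi chi) g))).
Proof. by []. Qed.

Lemma satn_fuel f n1 n2 D w : qc f <= n1 -> qc f <= n2 ->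
  satM n1 D w f <-> satM n2 D w f.
Proof.
elim/rank_ind: f n1 n2 D w => -[p|g|g h|a g|g h|G c g|G g] IH n1 n2 D w /= le1 le2.
- by rewrite !satn_Var.
- by rewrite !satn_Neg (IH g _ n1 n2) //; solve_rank.
- by rewrite !satn_And (IH g _ n1 n2) ?(IH h _ n1 n2) //; first [lia | solve_rank].
- have Eg v : satM n1 D v g <-> satM n2 D v g by apply: IH; first [lia | solve_rank].
  by rewrite !satn_K; split=> sat_g v Dv av; apply/Eg/sat_g.
- have Eg v : satM n1 D v g <-> satM n2 D v g by apply: IH; first [lia | solve_rank].
  rewrite !satn_Ann.
  have -> : (fun v => D v /\ satM n1 D v g) = (fun v => D v /\ satM n2 D v g).
    by apply: functional_extensionality => v; apply: propositional_extensionality; rewrite Eg.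
  by rewrite Eg (IH h _ n1 n2) //; first [lia | solve_rank].
- case: n1 le1 => // n1 le1; case: n2 le2 => // n2 le2.
  have Ec : satM n1.+1 D w c <-> satM n2.+1 D w c by apply: IH; first [lia | solve_rank].
  have E psi : isELG G psi ->
      satM n1 D w (Ann (And psi c) g) <-> satM n2 D w (Ann (And psi c) g).
    move=> ELG_psi; apply: IH; rewrite /= ?(isELG_qc ELG_psi); try lia.
    by left; rewrite /= (isELG_qdepth ELG_psi); lia.
  by rewrite !satn_GAnn Ec; split=> -[cw prem]; split=> // psi ELG_psi;
    apply/(E psi ELG_psi)/prem.
- case: n1 le1 => // n1 le1; case: n2 le2 => // n2 le2.
  have E psi chi : isELG G psi -> isELG (~: G) chi ->
      satM n1 D w (Imp psi (Dia (And psi chi) g)) <->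
      satM n2 D w (Imp psi (Dia (And psi chi) g)).
    move=> ELG_psi ELG_chi; apply: IH; rewrite /= ?(isELG_qc ELG_psi) ?(isELG_qc ELG_chi);
      try lia.
    by left; rewrite /= (isELG_qdepth ELG_psi) (isELG_qdepth ELG_chi); lia.
  rewrite !satn_CoAnn; split=> prem psi ELG_psi;
    have [chi [ELG_chi sat_chi]] := prem psi ELG_psi;
    by exists chi; split=> //; apply/(E psi chi ELG_psi ELG_chi).
Qed.

Definition holds D w (f : form) := satM (qc f) D w f.

Lemma satn_holds n D w f : qc f <= n -> satM n D w f <-> holds D w f.
Proof. by move=> le; apply: satn_fuel. Qed.

Lemma holds_Var D w p : holds D w (Var p) <-> Defs.val p w.
Proof. by rewrite /holds satn_Var. Qed.

Lemma holds_Neg D w g : holds D w (Neg g) <-> ~ holds D w g.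
Proof. by rewrite /holds satn_Neg. Qed.

Lemma holds_And D w g h : holds D w (And g h) <-> holds D w g /\ holds D w h.
Proof. by rewrite /holds satn_And /= !satn_holds //; lia. Qed.

Lemma holds_Imp D w g h : holds D w (Imp g h) <-> (holds D w g -> holds D w h).
Proof. by rewrite /Imp holds_Neg holds_And holds_Neg; tauto. Qed.

Lemma holds_K D w a g : holds D w (K a g) <-> forall v, D v -> Defs.rel a w v -> holds D v g.
Proof. by rewrite /holds satn_K. Qed.

Lemma holds_Ann D w g h :
  holds D w (Ann g h) <-> (holds D w g -> holds (fun v => D v /\ holds D v g) w h).
Proof.
rewrite /holds satn_Ann /=.
have -> : (fun v => D v /\ satM (qc g + qc h) D v g) = (fun v => D v /\ holds D v g).
  apply: functional_extensionality => v; apply: propositional_extensionality.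
  by rewrite satn_holds //; lia.
by rewrite !satn_holds //; lia.
Qed.

Lemma holds_GAnn D w G c g : holds D w (GAnn G c g) <->
  holds D w c /\ forall psi, isELG G psi -> holds D w (Ann (And psi c) g).
Proof.
rewrite {1}/holds [qc _]/= satn_GAnn (@satn_holds _ _ _ c); last lia.
split=> -[cw prem]; split=> // psi ELG_psi; move: (prem psi ELG_psi);
  by rewrite satn_holds //= (isELG_qc ELG_psi).
Qed.

Lemma holds_CoAnn D w G g : holds D w (CoAnn G g) <->
  forall psi, isELG G psi -> exists chi, isELG (~: G) chi /\
    holds D w (Imp psi (Dia (And psi chi) g)).
Proof.
rewrite {1}/holds [qc _]/= satn_CoAnn.
split=> prem psi ELG_psi; have [chi [ELG_chi sat_chi]] := prem psi ELG_psi;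
  exists chi; split=> //; move: sat_chi;
  by rewrite satn_holds //= (isELG_qc ELG_psi) (isELG_qc ELG_chi).
Qed.

Lemma holds_Ann_And_comm D w f g h :
  holds D w (Ann (And f g) h) <-> holds D w (Ann (And g f) h).
Proof.
rewrite !holds_Ann.
have -> : (fun v => D v /\ holds D v (And f g)) = (fun v => D v /\ holds D v (And g f)).
  apply: functional_extensionality => v; apply: propositional_extensionality.
  by rewrite !holds_And; tauto.
by rewrite !holds_And; tauto.
Qed.

Lemma holds_Ann_K D w f a g : holds D w (Ann f (K a g)) <->
  (holds D w f -> forall v, D v -> Defs.rel a w v -> holds D v (Ann f g)).
Proof.
rewrite holds_Ann holds_K; split=> [sat_fKg fw v Dv av | sat_fg fw v [Dv fv] av].
  by rewrite holds_Ann => fv; apply: sat_fKg.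
by move: (sat_fg fw v Dv av); rewrite holds_Ann; apply.
Qed.

Lemma holds_Ann_Ann D w f g h :
  holds D w (Ann f (Ann g h)) <-> holds D w (Ann (And f (Ann f g)) h).
Proof.
rewrite !holds_Ann holds_And holds_Ann.
set Df := fun v => D v /\ holds D v f.
have -> : (fun v => Df v /\ holds Df v g) = (fun v => D v /\ holds D v (And f (Ann f g))).
  apply: functional_extensionality => v; apply: propositional_extensionality.
  by rewrite holds_And holds_Ann /Df; tauto.
tauto.
Qed.

(* Needed to form members of L^G_EL: the empty conjunction is [Top p0]. *)
Variable p0 : P.

Lemma holds_quant D w Z : quantified Z ->
  holds D w Z <-> forall Y, omega_premise Z Y -> holds D w Y.
Proof.
case: Z => // [G c g|G g] _ /=.
  rewrite holds_GAnn; split=> [[cw prem] _ [psi ELG_psi ->] | prem].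
    by rewrite holds_And; split=> //; apply: prem.
  have [psi ELG_psi] := isELG_exists p0 G.
  have /holds_And [cw _] := prem _ (ex_intro2 _ _ psi ELG_psi erefl).
  split=> // psi' ELG_psi'.
  by have /holds_And [] := prem _ (ex_intro2 _ _ psi' ELG_psi' erefl).
rewrite holds_CoAnn; split=> [prem _ [psi ELG_psi ->] | prem psi ELG_psi].
  rewrite /DiaG holds_Neg holds_GAnn => -[psi_w none].
  have [chi [ELG_chi]] := prem psi ELG_psi.
  by rewrite holds_Imp /Dia holds_Neg => /(_ psi_w); apply; apply/holds_Ann_And_comm/none.
have := prem _ (ex_intro2 _ _ psi ELG_psi erefl).
rewrite /DiaG holds_Neg holds_GAnn => some_chi.
case: (classic (holds D w psi)) => psi_w; last first.
  have [chi ELG_chi] := isELG_exists p0 (~: G).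
  by exists chi; split=> //; rewrite holds_Imp.
apply: NNPP => none; apply: some_chi; split=> // chi ELG_chi.
apply/holds_Ann_And_comm; apply: NNPP => not_ann; apply: none; exists chi.
by split=> //; rewrite holds_Imp /Dia holds_Neg.
Qed.

Lemma holds_Ann_quant D w f Z : quantified Z ->
  holds D w (Ann f Z) <-> forall Y, omega_premise Z Y -> holds D w (Ann f Y).
Proof.
move=> qZ; rewrite holds_Ann (holds_quant _ _ qZ).
split=> [sat_Z Y prem | sat_Y fw Y prem].
  by rewrite holds_Ann => fw; exact: sat_Z fw Y prem.
by move: (sat_Y Y prem); rewrite holds_Ann; apply.
Qed.

End Semantics.

(** * Theories and maximal consistent sets *)

Ltac prove_taut :=
  let v := fresh "v" in
  move=> v; rewrite /Imp /Iff /=;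
  repeat match goal with |- context [peval v ?x] => case: (peval v x) end; by [].

(* Closure under R5/R6 is required in every necessity form, as in the axiom system,
   so that it survives the passage to [fun g => T (K a g)]. *)
Definition theory (T : form -> Prop) :=
  [/\ forall f, CoRGAL f -> T f,
      forall f g, T (Imp f g) -> T f -> T g &
      forall e Z, quantified Z ->
        (forall Y, omega_premise Z Y -> T (fill e Y)) -> T (fill e Z)].

Lemma CoRGAL_theory : theory (@CoRGAL A P).
Proof. by split=> // [f g|]; [apply: Ru0 | apply: CoRGAL_omega]. Qed.

Section Theory.
Variable T : form -> Prop.
Hypothesis thT : theory T.

Lemma theory_CoRGAL f : CoRGAL f -> T f.
Proof. by case: thT => + _ _; apply. Qed.

Lemma theory_mp f g : T (Imp f g) -> T f -> T g.
Proof. by case: thT => _ + _; apply. Qed.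

Lemma theory_omega e Z : quantified Z ->
  (forall Y, omega_premise Z Y -> T (fill e Y)) -> T (fill e Z).
Proof. by case: thT => _ _; apply. Qed.

Lemma theory_taut f : taut f -> T f.
Proof. by move=> tf; apply/theory_CoRGAL/Ax0. Qed.

Lemma theory_taut_imp f g : taut (Imp f g) -> T f -> T g.
Proof. by move=> tfg; apply/theory_mp/theory_taut. Qed.

Lemma theory_taut_imp2 f g h : taut (Imp f (Imp g h)) -> T f -> T g -> T h.
Proof. by move=> tfgh /(theory_taut_imp tfgh); apply: theory_mp. Qed.

Lemma theory_K a : theory (fun g => T (K a g)).
Proof.
split=> [f /(Ru1 a) /theory_CoRGAL // | f g Kfg Kf | e Z qZ prem].
  exact: theory_mp (theory_mp (theory_CoRGAL (Ax1 a f g)) Kfg) Kf.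
exact: (theory_omega (e := NK a e) qZ).
Qed.

End Theory.

Definition maximal_consistent (T : form -> Prop) :=
  [/\ theory T, forall f, T f \/ T (Neg f) & forall f, T f -> T (Neg f) -> False].

Section MaximalConsistent.
Variable Gam : form -> Prop.
Hypothesis mcGam : maximal_consistent Gam.

Let thGam : theory Gam. Proof. by case: mcGam. Qed.

Lemma mc_Neg f : Gam (Neg f) <-> ~ Gam f.
Proof.
case: mcGam => _ maxG consG; split=> [nf f_in | f_out]; first exact: consG f_in nf.
by case: (maxG f).
Qed.

Lemma mc_And f g : Gam (And f g) <-> Gam f /\ Gam g.
Proof.
split=> [fg | [f_in g_in]]; last by apply: (theory_taut_imp2 thGam) f_in g_in; prove_taut.
by split; apply: (theory_taut_imp thGam) fg; prove_taut.
Qed.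

Lemma mc_Imp f g : Gam (Imp f g) <-> (Gam f -> Gam g).
Proof. by rewrite /Imp mc_Neg mc_And mc_Neg; tauto. Qed.

Lemma mc_CoRGAL_mp f g : CoRGAL (Imp f g) -> Gam f -> Gam g.
Proof. by move=> /(theory_CoRGAL thGam) /mc_Imp. Qed.

Lemma mc_CoRGAL_iff f g : CoRGAL (Iff f g) -> (Gam f <-> Gam g).
Proof. by move=> /(theory_CoRGAL thGam); rewrite /Iff mc_And !mc_Imp; tauto. Qed.

Lemma mc_quant Z : quantified Z -> Gam Z <-> forall Y, omega_premise Z Y -> Gam Y.
Proof.
move=> qZ; split=> [Z_in Y prem | ]; last exact: (theory_omega thGam (e := NHole)).
exact: (mc_CoRGAL_mp (CoRGAL_premise prem) Z_in).
Qed.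

Lemma mc_Ann_CoRGAL_imp f Z X : CoRGAL (Imp Z X) -> Gam f -> Gam (Ann f Z) -> Gam (Ann f X).
Proof.
move=> /(Ru2 f) /(theory_CoRGAL thGam).
rewrite /Imp (mc_CoRGAL_iff (Ax6 _ _)) mc_Imp mc_Neg (mc_CoRGAL_iff (Ax7 _ _ _)) mc_And.
rewrite (mc_CoRGAL_iff (Ax6 _ _)) mc_Imp mc_Neg => fZX f_in fZ.
by apply: NNPP => fX; apply: (fZX f_in).
Qed.

End MaximalConsistent.

(** * The Lindenbaum lemma *)

Fixpoint form_tree (f : form) : GenTree.tree (P + (A + {set A})) :=
  match f with
  | Var p => GenTree.Leaf (inl p)
  | Neg g => GenTree.Node 0 [:: form_tree g]
  | And g h => GenTree.Node 1 [:: form_tree g; form_tree h]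
  | K a g => GenTree.Node 2 [:: GenTree.Leaf (inr (inl a)); form_tree g]
  | Ann g h => GenTree.Node 3 [:: form_tree g; form_tree h]
  | GAnn G c g => GenTree.Node 4 [:: GenTree.Leaf (inr (inr G)); form_tree c; form_tree g]
  | CoAnn G g => GenTree.Node 5 [:: GenTree.Leaf (inr (inr G)); form_tree g]
  end.

Fixpoint tree_form (t : GenTree.tree (P + (A + {set A}))) : option form :=
  match t with
  | GenTree.Leaf (inl p) => Some (Var p)
  | GenTree.Node 0 [:: t1] => omap (@Neg A P) (tree_form t1)
  | GenTree.Node 1 [:: t1; t2] =>
      if (tree_form t1, tree_form t2) is (Some g, Some h) then Some (And g h) else None
  | GenTree.Node 2 [:: GenTree.Leaf (inr (inl a)); t1] => omap (K a) (tree_form t1)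
  | GenTree.Node 3 [:: t1; t2] =>
      if (tree_form t1, tree_form t2) is (Some g, Some h) then Some (Ann g h) else None
  | GenTree.Node 4 [:: GenTree.Leaf (inr (inr G)); t1; t2] =>
      if (tree_form t1, tree_form t2) is (Some c, Some g) then Some (GAnn G c g) else None
  | GenTree.Node 5 [:: GenTree.Leaf (inr (inr G)); t1] => omap (CoAnn G) (tree_form t1)
  | _ => None
  end.

Lemma form_treeK : pcancel form_tree tree_form.
Proof. by elim=> //= [g ->|g -> h ->|a g ->|g -> h ->|G c -> g ->|G g ->]. Qed.

HB.instance Definition _ := PCanIsCountable form_treeK.

Fixpoint nform_layers (e : nform) : seq (form + A + form) :=
  match e with
  | NHole => [::]
  | NImp f e' => inl (inl f) :: nform_layers e'
  | NK a e' => inl (inr a) :: nform_layers e'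
  | NAnn f e' => inr f :: nform_layers e'
  end.

Fixpoint layers_nform (s : seq (form + A + form)) : nform :=
  match s with
  | [::] => NHole
  | inl (inl f) :: s' => NImp f (layers_nform s')
  | inl (inr a) :: s' => NK a (layers_nform s')
  | inr f :: s' => NAnn f (layers_nform s')
  end.

Lemma nform_layersK : cancel nform_layers layers_nform.
Proof. by elim=> //= [f e ->|a e ->|f e ->]. Qed.

HB.instance Definition _ := CanIsCountable nform_layersK.

Lemma unpickle_onto (x : form * nform) : exists n, unpickle n = Some x.
Proof. by exists (pickle x); rewrite pickleK. Qed.

Section Lindenbaum.
Variable T : form -> Prop.
Hypothesis thT : theory T.
Variable f0 : form.
Hypothesis f0_out : ~ T f0.

Definition consistent c := ~ T (Neg c).

(* [w] refutes every instance of R5/R6 whose conclusion is [f] in the context [e]. *)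
Definition witness c f e w :=
  consistent (And c w) /\
  forall Z, quantified Z -> f = fill e Z -> exists2 Y, omega_premise Z Y & w = Neg (fill e Y).

Lemma witness_exists c f e : consistent (And c (Neg f)) ->
  exists w, witness (And c (Neg f)) f e w.
Proof.
set c1 := And c (Neg f) => cons_c1.
have c1_nf : ~ T (Imp c1 f).
  by move=> c1f; apply: cons_c1; apply: (theory_taut_imp thT) c1f; prove_taut.
case: (classic (exists2 Z, quantified Z & f = fill e Z)) => [[Z qZ fZ] | noZ].
  (* [consistent (And c1 (Neg y))] unfolds to [~ T (Imp c1 y)]. *)
  have [Y prem cons_Y] : exists2 Y, omega_premise Z Y & consistent (And c1 (Neg (fill e Y))).
    apply: NNPP => none; apply: c1_nf; rewrite fZ.
    apply: (theory_omega thT (e := NImp c1 e)) => // Y prem /=.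
    by apply: NNPP => c1_nY; apply: none; exists Y.
  exists (Neg (fill e Y)); split=> // Z' _; rewrite fZ => /fill_inj <-.
  by exists Y.
exists c1; split=> [c1c1 | Z qZ fZ]; last by case: noZ; exists Z.
by apply: cons_c1; apply: (theory_taut_imp thT) c1c1; prove_taut.
Qed.

(* [chain n] is the conjunction of all that stages [0..n-1] added to [Neg f0]. *)
Definition step c (o : option (form * nform)) : form :=
  if o is Some (f, e) then
    if excluded_middle_informative (consistent (And c f)) then And c f
    else And (And c (Neg f)) (epsilon (inhabits f) (witness (And c (Neg f)) f e))
  else c.

Fixpoint chain n : form :=
  if n is m.+1 then step (chain m) (unpickle m) else Neg f0.

Lemma step_imp c o : T (Imp (step c o) c).
Proof.
case: o => [[f e]|] /=; last by apply: (theory_taut thT); prove_taut.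
by case: excluded_middle_informative => ?; apply: (theory_taut thT); prove_taut.
Qed.

Lemma chain_mono n m : n <= m -> T (Imp (chain m) (chain n)).
Proof.
elim: m => [|m IH]; first by rewrite leqn0 => /eqP ->; apply: (theory_taut thT); prove_taut.
rewrite leq_eqVlt => /orP [/eqP -> | /IH mn]; first by apply: (theory_taut thT); prove_taut.
by apply: (theory_taut_imp2 thT) (step_imp (chain m) (unpickle m)) mn; prove_taut.
Qed.

Lemma consistent_Neg c f :
  consistent c -> ~ consistent (And c f) -> consistent (And c (Neg f)).
Proof.
move=> cons_c /NNPP c_nf c_f; apply: cons_c.
by apply: (theory_taut_imp2 thT) c_f c_nf; prove_taut.
Qed.

Lemma chain_consistent n : consistent (chain n).
Proof.
elim: n => [|n IH] /=.
  by move=> nnf0; apply: f0_out; apply: (theory_taut_imp thT) nnf0; prove_taut.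
case: (unpickle n) => [[f e]|] //=; case: excluded_middle_informative => // not_cons.
exact: (proj1 (epsilon_spec _ _ (witness_exists e (consistent_Neg IH not_cons)))).
Qed.

Definition lindenbaum_set g := exists n, T (Imp (chain n) g).

Lemma lindenbaum_set_at n m g : n <= m -> T (Imp (chain n) g) -> T (Imp (chain m) g).
Proof. by move=> /chain_mono mn ng; apply: (theory_taut_imp2 thT) mn ng; prove_taut. Qed.

Lemma lindenbaum_set_consistent g : lindenbaum_set g -> lindenbaum_set (Neg g) -> False.
Proof.
move=> [n ng] [m nng]; apply: (@chain_consistent (maxn n m)).
apply: (theory_taut_imp2 thT)
  (lindenbaum_set_at (leq_maxl n m) ng) (lindenbaum_set_at (leq_maxr n m) nng).
prove_taut.
Qed.

Lemma chain_decides n f e : unpickle n = Some (f, e) ->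
  lindenbaum_set f \/ exists w, [/\ T (Imp (chain n.+1) (Neg f)),
    T (Imp (chain n.+1) w) & witness (And (chain n) (Neg f)) f e w].
Proof.
move=> en; rewrite /= en /step; case: excluded_middle_informative => [f_cons | not_cons].
  left; exists n.+1; rewrite /= en /step.
  by case: excluded_middle_informative => // ?; apply: (theory_taut thT); prove_taut.
right; set w := epsilon _ _; exists w; split; try by apply: (theory_taut thT); prove_taut.
exact: epsilon_spec (witness_exists e (consistent_Neg (@chain_consistent n) not_cons)).
Qed.

Lemma lindenbaum_set_maximal g : lindenbaum_set g \/ lindenbaum_set (Neg g).
Proof.
have [n en] := unpickle_onto (g, NHole).
by case: (chain_decides en) => [|[w [ng _ _]]]; [left | right; exists n.+1].
Qed.

Lemma lindenbaum_set_theory : theory lindenbaum_set.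
Proof.
split=> [f f_in | f g [n nfg] [m nf] | e Z qZ prem].
- by exists 0; apply: (theory_taut_imp thT) (theory_CoRGAL thT f_in); prove_taut.
- exists (maxn n m).
  apply: (theory_taut_imp2 thT)
    (lindenbaum_set_at (leq_maxl n m) nfg) (lindenbaum_set_at (leq_maxr n m) nf).
  prove_taut.
have [n en] := unpickle_onto (fill e Z, e).
case: (chain_decides en) => [// | [w [_ nw [_ refutes]]]].
have [Y /prem Y_in w_eq] := refutes Z qZ erefl.
by case: (lindenbaum_set_consistent Y_in); exists n.+1; rewrite -w_eq.
Qed.

Lemma lindenbaum_set_mc : maximal_consistent lindenbaum_set.
Proof.
split; [exact: lindenbaum_set_theory | exact: lindenbaum_set_maximal |].
exact: lindenbaum_set_consistent.
Qed.

Lemma lindenbaum_set_sub g : T g -> lindenbaum_set g.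
Proof. by move=> g_in; exists 0; apply: (theory_taut_imp thT) g_in; prove_taut. Qed.

Lemma lindenbaum_set_f0 : ~ lindenbaum_set f0.
Proof.
move=> [n nf0]; apply: (@chain_consistent n).
by apply: (theory_taut_imp2 thT) nf0 (chain_mono (leq0n n)); prove_taut.
Qed.

End Lindenbaum.

Lemma lindenbaum T f : theory T -> ~ T f ->
  exists Gam, [/\ maximal_consistent Gam, forall g, T g -> Gam g & ~ Gam f].
Proof.
move=> thT f_out; exists (lindenbaum_set T f).
by split; [apply: lindenbaum_set_mc | apply: lindenbaum_set_sub | apply: lindenbaum_set_f0].
Qed.

(** * The canonical model and the truth lemma *)

Definition mc_world := {Gam : form -> Prop | maximal_consistent Gam}.

Definition mc_rel a (Gam Del : mc_world) := forall f, sval Gam (K a f) -> sval Del f.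

Lemma mc_rel_refl a (Gam : mc_world) : mc_rel a Gam Gam.
Proof. by move=> f; exact: (mc_CoRGAL_mp (svalP Gam) (Ax2 a f)). Qed.

Lemma mc_rel_sym a (Gam Del : mc_world) : mc_rel a Gam Del -> mc_rel a Del Gam.
Proof.
move=> GD f Kf; apply: NNPP => f_out.
have nKf : sval Gam (Neg (K a f)) by apply/(mc_Neg (svalP Gam)) => /(@mc_rel_refl a Gam f).
by have /GD /(mc_Neg (svalP Del)) := mc_CoRGAL_mp (svalP Gam) (Ax4 a f) nKf.
Qed.

Lemma mc_rel_trans a (Gam Del Eps : mc_world) :
  mc_rel a Gam Del -> mc_rel a Del Eps -> mc_rel a Gam Eps.
Proof. by move=> GD DE f Kf; apply/DE/GD/(mc_CoRGAL_mp (svalP Gam) (Ax3 a f)). Qed.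

Lemma mc_rel_exists a (Gam : mc_world) h : ~ sval Gam (K a h) ->
  exists2 Del : mc_world, mc_rel a Gam Del & ~ sval Del h.
Proof.
have [thG _ _] := svalP Gam.
move=> /(lindenbaum (theory_K thG a)) [Del [mcD GD h_out]].
by exists (exist _ Del mcD).
Qed.

Definition canonical_model (w0 : mc_world) : model :=
  @Model A P mc_world w0 mc_rel mc_rel_refl mc_rel_sym mc_rel_trans
    (fun p Gam => sval Gam (Var p)).

Section Truth.
Variables (p0 : P) (w0 : mc_world).
Local Notation M := (canonical_model w0).
Local Notation everywhere := (fun _ : world M => True).

Definition truthful f := forall Gam : world M, holds everywhere Gam f <-> sval Gam f.

Lemma truth_K a g : truthful g -> truthful (K a g).
Proof.
move=> IH Gam; rewrite holds_K; split=> [sat_g | Kg Del _ GD]; last by apply/IH/GD.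
by apply: NNPP => /mc_rel_exists [Del GD]; apply; apply/IH/sat_g.
Qed.

Lemma truth_quant Z : quantified Z ->
  (forall Y, omega_premise Z Y -> truthful Y) -> truthful Z.
Proof.
move=> qZ IH Gam; rewrite (holds_quant p0 _ _ qZ) (mc_quant (svalP Gam) qZ).
by split=> sat Y prem; apply/(IH Y prem)/sat.
Qed.

Lemma truth_Ann_quant phi Z : quantified Z -> truthful phi ->
  (forall Y, omega_premise Z Y -> truthful (Ann phi Y)) -> truthful (Ann phi Z).
Proof.
move=> qZ IHphi IH Gam; have [thG _ _] := svalP Gam.
rewrite (holds_Ann_quant p0 _ _ _ qZ); split=> [sat | phiZ Y prem].
  by apply: (theory_omega thG (e := NAnn phi NHole)) => // Y prem; apply/(IH Y prem)/sat.
case: (classic (sval Gam phi)) => [phi_in | phi_out]; last by rewrite holds_Ann => /IHphi.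
apply/(IH Y prem Gam).
exact: (mc_Ann_CoRGAL_imp (svalP Gam) (CoRGAL_premise prem) phi_in phiZ).
Qed.

Lemma truth_Ann phi g :
  (forall h, rank_lt h (Ann phi g) -> truthful h) -> truthful (Ann phi g).
Proof.
move=> IH; have IHphi : truthful phi by apply: IH; solve_rank.
case qg: (quantified g).
  by apply: truth_Ann_quant => // Y prem; apply: IH; exact: rank_Ann_premise.
case: g IH qg => [p|g|g h|a g|psi chi|//|//] IH _ Gam; have mcG := svalP Gam.
- by rewrite holds_Ann holds_Var IHphi (mc_CoRGAL_iff mcG (Ax5 _ _)) (mc_Imp mcG).
- rewrite (mc_CoRGAL_iff mcG (Ax6 _ _)) (mc_Imp mcG) (mc_Neg mcG) -IHphi -(IH (Ann phi g));
    last by solve_rank.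
  by rewrite !holds_Ann holds_Neg; tauto.
- rewrite (mc_CoRGAL_iff mcG (Ax7 _ _ _)) (mc_And mcG) -(IH (Ann phi g)) -?(IH (Ann phi h));
    try by solve_rank.
  by rewrite !holds_Ann holds_And; tauto.
- rewrite holds_Ann_K (mc_CoRGAL_iff mcG (Ax8 _ _ _)) (mc_Imp mcG) IHphi.
  have IHg : truthful (Ann phi g) by apply: IH; solve_rank.
  split=> [sat phi_in | Kg phi_in Del _ GD]; last by apply/IHg/GD/Kg.
  by apply: NNPP => /mc_rel_exists [Del GD]; apply; apply/IHg/sat.
- by rewrite holds_Ann_Ann (mc_CoRGAL_iff mcG (Ax9 _ _ _)); apply: IH; solve_rank.
Qed.

Lemma truth f : truthful f.
Proof.
elim/rank_ind: f => f IH; case qf: (quantified f).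
  by apply: truth_quant => // Y /rank_premise /IH.
case: f IH qf => [p|g|g h|a g|phi g|//|//] IH _.
- by move=> Gam; rewrite holds_Var.
- by move=> Gam; rewrite holds_Neg (mc_Neg (svalP Gam)) IH //; solve_rank.
- by move=> Gam; rewrite holds_And (mc_And (svalP Gam)) !IH //; solve_rank.
- by apply: truth_K; apply: IH; solve_rank.
- exact: truth_Ann.
Qed.

End Truth.

End Completeness.

Theorem mainTheorem15 (A : finType) (P : countType) (phi : form A P) :
  valid phi -> CoRGAL phi.
Proof.
move=> valid_phi; apply: NNPP => /(lindenbaum (CoRGAL_theory A P)) [Gam [mcGam _ phi_out]].
pose w0 : mc_world A P := exist _ Gam mcGam.
have truth_phi := truth (some_var phi) (w0 := w0) phi w0.
exact/phi_out/truth_phi.1/valid_phi.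
Qed.
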